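(* Let $X$ satisfy (P1) and (P2), let $\alpha$ be a saddle connection on $X$ which is neither a side nor a diagonal, and consider a maximal run of consecutive adjacent segments in the polygonal decomposition of $\alpha$. If two segments of this run lie in the same polygon and have the same sign, then the run contains an even number of segments.
   Context: $X$ is a translation surface obtained from finitely many Euclidean polygons by gluing pairs of parallel sides of equal length by translations, with (P1): each polygon convex with all angles obtuse or right; (P2): no two sides of the same polygon are identified. Saddle connection: straight segment between singularities (images of vertices) with none in its interior; a diagonal is a segment inside a polygon joining two non-adjacent vertices. Polygonal decomposition: cut $\alpha$ each time it passes from one polygon to another, giving consecutive (oriented) segments $\alpha_1,\dots,\alpha_k$, each in one polygon. A segment in polygon $P$ is adjacent if it goes from the relative interior of a side $e$ of $P$ to the relative interior of a side adjacent to $e$; otherwise non-adjacent. Labeling the sides of each polygon $P$ in cyclic clockwise order $e_1,\dots,e_N$, an adjacent segment in $P$ has positive sign if it goes from some $e_u$ to $e_{u+1}$ and negative sign if it goes from $e_u$ to $e_{u-1}$. *)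

(* Translation surfaces built from finitely many convex
   Euclidean polygons glued along parallel sides of equal length. *)
From HB Require Import structures.
From mathcomp Require Import all_boot all_order all_algebra.
From mathcomp Require Import reals.
Set Implicit Arguments. Unset Strict Implicit. Unset Printing Implicit Defensive.
Import Order.TTheory GRing.Theory Num.Theory.
Local Open Scope ring_scope.

Section PolySurf.
Variable R : realType.

Definition pt := (R * R)%type.
Definition padd (p q : pt) : pt := (p.1 + q.1, p.2 + q.2).
Definition psub (p q : pt) : pt := (p.1 - q.1, p.2 - q.2).
Definition pscale (t : R) (p : pt) : pt := (t * p.1, t * p.2).
Definition cross (p q : pt) : R := p.1 * q.2 - p.2 * q.1.
Definition dot (p q : pt) : R := p.1 * q.1 + p.2 * q.2.

(* Raw data of a polygon gluing: [np] polygons; polygon [j] has [ns j]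
   vertices [vtx j 0, ..., vtx j (ns j - 1)] listed in clockwise cyclic
   order; side [u] of polygon [j] goes from [vtx j u] to [vtx j (u+1)].
   [glue] pairs each side with the side it is identified with. *)
Record polysurf := PolySurf {
  np : nat;
  ns : 'I_np -> nat;
  vtx : forall j : 'I_np, 'I_(ns j) -> pt;
  glue : {j : 'I_np & 'I_(ns j)} -> {j : 'I_np & 'I_(ns j)}
}.

Variable X : polysurf.

Definition side := {j : 'I_(np X) & 'I_(ns j)}.
Definition mkside (j : 'I_(np X)) (u : 'I_(ns j)) : side := existT _ j u.
Definition side_start (s : side) : pt := vtx (tagged s).
Definition side_end (s : side) : pt := vtx (ordS (tagged s)).
Definition side_vec (s : side) : pt := psub (side_end s) (side_start s).
Definition snext (s : side) : side := existT _ (tag s) (ordS (tagged s)).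
Definition sprev (s : side) : side := existT _ (tag s) (ord_pred (tagged s)).

(* strict convexity with clockwise orientation: every vertex not on side u
   lies strictly to the right of the oriented line of side u *)
Definition convex_cw (j : 'I_(np X)) : Prop :=
  forall u w : 'I_(ns j), w != u -> w != ordS u ->
    cross (side_vec (mkside u)) (psub (vtx w) (vtx u)) < 0.

(* every interior angle is obtuse or right (>= pi/2) *)
Definition angles_obtuse_or_right (j : 'I_(np X)) : Prop :=
  forall u : 'I_(ns j),
    0 <= dot (side_vec (mkside u)) (side_vec (mkside (ordS u))).

(* the gluing is a pairing of sides by translations: glued sides are
   parallel, of equal length, with opposite orientation (both polygons
   being clockwise) *)
Definition valid_gluing : Prop :=
  (forall s : side, glue (glue s) = s) /\
  (forall s : side, side_vec (glue s) = pscale (-1) (side_vec s)).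

Definition P1 : Prop :=
  forall j : 'I_(np X), (3 <= ns j)%N /\ convex_cw j /\ angles_obtuse_or_right j.

Definition P2 : Prop := forall s : side, tag (glue s) != tag s.

Definition in_poly_interior (j : 'I_(np X)) (p : pt) : Prop :=
  forall u : 'I_(ns j), cross (side_vec (mkside u)) (psub p (vtx u)) < 0.

Definition in_side_interior (s : side) (p : pt) : Prop :=
  exists t : R, 0 < t < 1 /\ p = padd (side_start s) (pscale t (side_vec s)).

(* translation carrying side s onto the side glued to it
   (side_start s is identified with side_end (glue s)) *)
Definition glue_transl (s : side) : pt := psub (side_end (glue s)) (side_start s).

(* An oriented saddle connection alpha, given through its polygonal
   decomposition alpha_0, ..., alpha_(k-1): segment alpha_i lies in polygon
   [P i] and goes from [a i] to [b i]; for i < k-1 it leaves [P i] through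
   the relative interior of the side [ex i] of [P i] and re-enters in
   polygon [P (i+1)] = the polygon of [glue (ex i)] at the translated point;
   all segments have the same direction [d]; alpha starts and ends at
   vertices (singularities) and has no singularity in its interior. *)
Definition is_side_segment (j : 'I_(np X)) (p q : pt) : Prop :=
  exists s : side, tag s = j /\
    ((p = side_start s /\ q = side_end s) \/ (p = side_end s /\ q = side_start s)).

Definition saddle_connection (k : nat) (P : nat -> 'I_(np X))
    (a b : nat -> pt) (ex : nat -> side) (d : pt) : Prop :=
  [/\ (1 <= k)%N /\ d != (0, 0),
      (forall i, (i < k)%N -> exists l : R, 0 < l /\ psub (b i) (a i) = pscale l d),
      ((exists u, a 0%N = @vtx X (P 0%N) u) /\ (exists u, b (k.-1) = @vtx X (P (k.-1)) u)),
      (forall i, (i.+1 < k)%N ->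
         [/\ tag (ex i) = P i, in_side_interior (ex i) (b i),
             P i.+1 = tag (glue (ex i)) &
             a i.+1 = padd (b i) (glue_transl (ex i))]) &
      (forall i, (i < k)%N ->
         (forall t : R, 0 < t < 1 ->
            in_poly_interior (P i) (padd (a i) (pscale t (psub (b i) (a i)))))
         \/ (k = 1%N /\ is_side_segment (P i) (a i) (b i)))].

Definition sc_is_side (k : nat) (P : nat -> 'I_(np X)) (a b : nat -> pt) : Prop :=
  k = 1%N /\ is_side_segment (P 0%N) (a 0%N) (b 0%N).

Definition sc_is_diagonal (k : nat) (P : nat -> 'I_(np X)) (a b : nat -> pt) : Prop :=
  k = 1%N /\ exists u w : 'I_(ns (P 0%N)),
    [/\ a 0%N = vtx u, b 0%N = vtx w, w != u, w != ordS u & u != ordS w].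

(* segment i (0 < i < k-1) enters P i through the side glue (ex (i-1)) and
   leaves it through the side ex i *)
Definition seg_positive (k : nat) (ex : nat -> side) (i : nat) : Prop :=
  [/\ (0 < i)%N, (i.+1 < k)%N & ex i = snext (glue (ex i.-1))].
Definition seg_negative (k : nat) (ex : nat -> side) (i : nat) : Prop :=
  [/\ (0 < i)%N, (i.+1 < k)%N & ex i = sprev (glue (ex i.-1))].
(* adjacent segment: from the relative interior of a side to the relative
   interior of an adjacent side (the first and last segments start/end at
   a vertex, hence are never adjacent) *)
Definition seg_adjacent (k : nat) (ex : nat -> side) (i : nat) : Prop :=
  seg_positive k ex i \/ seg_negative k ex i.

Definition maximal_adjacent_run (k : nat) (ex : nat -> side) (i j : nat) : Prop :=
  [/\ (i <= j)%N, (j < k)%N,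
      (forall l, (i <= l <= j)%N -> seg_adjacent k ex l),
      ((0 < i)%N -> ~ seg_adjacent k ex i.-1) &
      ((j.+1 < k)%N -> ~ seg_adjacent k ex j.+1)].

End PolySurf.

(* Write [exit_dot m] for the dot product of [d] with the side
   through which segment [m] leaves its polygon.  By convexity and the angle
   condition, an adjacent segment flips the sign of [exit_dot], so the parity
   of a run is read off by comparing the signs of [exit_dot] just before its
   first and at its last segment.  Two segments of the run in the same
   polygon with the same sign enter it through the same side; since an
   adjacent segment is determined both by its entry side and by its exit
   side, the exit sides along the run are then periodic.  The periodic copies
   of the trajectory run parallel at a constant transverse offset, and the
   maximality of the run forces the sign of this offset to agree with the sign
   of [exit_dot] at each end.  Hence both ends have the same sign and the run
   has even length. *)

From mathcomp Require Import all_boot all_order all_algebra reals.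
From mathcomp Require Import ring lra zify.
Set Implicit Arguments. Unset Strict Implicit. Unset Printing Implicit Defensive.
Import Order.TTheory GRing.Theory Num.Theory.
Local Open Scope ring_scope.

Lemma mul_gt0_same_sign (R : realDomainType) (x y z : R) :
  0 < x * z -> 0 < y * z -> (0 < x) = (0 < y).
Proof. by move=> xz yz; apply/idP/idP => ?; nra. Qed.

Section PlaneGeometry.
Variable R : realType.
Implicit Types (v w e x y z : pt R) (t : R).

Lemma crossNl v e : cross (pscale (-1) v) e = - cross v e.
Proof. rewrite /cross /pscale /=; ring. Qed.

Lemma crossNr v e : cross v (pscale (-1) e) = - cross v e.
Proof. rewrite /cross /pscale /=; ring. Qed.

Lemma dotNl v e : dot (pscale (-1) v) e = - dot v e.
Proof. rewrite /dot /pscale /=; ring. Qed.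

Lemma dotNr v e : dot v (pscale (-1) e) = - dot v e.
Proof. rewrite /dot /pscale /=; ring. Qed.

Lemma cross_psubB e x y z :
  cross e (psub x z) - cross e (psub y z) = cross e (psub x y).
Proof. rewrite /cross /psub /=; ring. Qed.

Lemma cross_lerp e x y z t :
  cross e (psub (padd x (pscale t (psub y x))) z)
  = (1 - t) * cross e (psub x z) + t * cross e (psub y z).
Proof. rewrite /cross /psub /padd /pscale /=; ring. Qed.

Lemma dot_self_gt0 v e : cross v e != 0 -> 0 < dot v v.
Proof.
case: v e => v1 v2 [e1 e2]; rewrite /cross /dot /= => cr.
rewrite lt_def -!expr2 addr_ge0 ?sqr_ge0 // andbT.
apply: contra cr; rewrite paddr_eq0 ?sqr_ge0 // !sqrf_eq0.
by case/andP=> /eqP-> /eqP->; rewrite !mul0r subr0.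
Qed.

Lemma dot_self_gt0r v e : cross v e != 0 -> 0 < dot e e.
Proof.
move=> cr; apply: (@dot_self_gt0 e v); apply: contra cr.
by rewrite /cross -oppr_eq0 opprB [_.1 * _]mulrC [_.2 * _]mulrC.
Qed.

(* Geometrically: [v] and [w] are consecutive sides of a clockwise corner of
   angle at least [pi/2], and [e] crosses [v] inwards and [w] outwards. *)
Lemma corner_dot_gt0 v w e : cross v w < 0 -> 0 <= dot v w ->
  cross v e < 0 -> 0 < cross w e -> 0 < dot v e /\ 0 < dot w e.
Proof.
move=> vw vw_dot ve we.
have vv := dot_self_gt0 (ltr0_neq0 ve); have ww := dot_self_gt0 (lt0r_neq0 we).
have idv : cross v w * dot v e = - cross w e * dot v v + cross v e * dot v w.
  by case: v w e {vw vw_dot ve we vv ww} => [? ?] [? ?] [? ?]; rewrite /cross /dot /=; ring.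
have idw : cross v w * dot w e = - cross w e * dot v w + cross v e * dot w w.
  by case: v w e {vw vw_dot ve we vv ww idv} => [? ?] [? ?] [? ?]; rewrite /cross /dot /=; ring.
split; rewrite -(nmulr_rlt0 _ vw) ?idv ?idw; nra.
Qed.

Lemma corner_dot_lt0 v w e : cross v w < 0 -> 0 <= dot v w ->
  0 < cross v e -> cross w e < 0 -> dot v e < 0 /\ dot w e < 0.
Proof.
move=> vw vw_dot ve we.
have [] := @corner_dot_gt0 v w (pscale (-1) e) vw vw_dot;
  by rewrite ?crossNr ?dotNr ?oppr_lt0 ?oppr_gt0.
Qed.

Lemma collinearE e x : cross e x = 0 -> 0 < dot e e ->
  x = pscale (dot x e / dot e e) e.
Proof.
case: e x => e1 e2 [x1 x2]; rewrite /cross /dot /pscale /= => cr ee.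
have nz : e1 * e1 + e2 * e2 != 0 by rewrite gt_eqF.
congr pair; rewrite mulrAC; apply/(mulIf nz); rewrite divfK //.
- have -> : (x1 * e1 + x2 * e2) * e1 = x1 * (e1 * e1 + e2 * e2) + e2 * (e1 * x2 - e2 * x1)
    by ring.
  by rewrite cr mulr0 addr0.
- have -> : (x1 * e1 + x2 * e2) * e2 = x2 * (e1 * e1 + e2 * e2) - e1 * (e1 * x2 - e2 * x1)
    by ring.
  by rewrite cr mulr0 subr0.
Qed.

Lemma segment_meets_line e x y z :
  cross e (psub x z) * cross e (psub y z) < 0 ->
  exists2 t, 0 < t < 1 & cross e (psub (padd x (pscale t (psub y x))) z) = 0.
Proof.
set hx := cross e (psub x z); set hy := cross e (psub y z) => sgn.
have nz : hx - hy != 0.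
  by apply: contraTneq sgn => /subr0_eq->; rewrite -leNgt -expr2 sqr_ge0.
exists (hx / (hx - hy)); last by rewrite cross_lerp -/hx -/hy; field.
clearbody hx hy.
have frac (n m : R) : 0 < n -> n < m -> 0 < n / m < 1.
  by move=> n0 nm; rewrite divr_gt0 ?ltr_pdivrMr ?mul1r //=; lra.
have [[hx0 hy0]|[hx0 hy0]] : (hx < 0 /\ 0 < hy) \/ (0 < hx /\ hy < 0) by nra.
- by rewrite -divrNN; apply: frac; lra.
- by apply: frac; lra.
Qed.

End PlaneGeometry.
Section ConvexPolygon.
Variables (R : realType) (X : polysurf R).
Hypothesis HP1 : P1 X.

Local Notation edge u := (side_vec (mkside u)).

Lemma ns_ge3 (j : 'I_(np X)) : (3 <= ns j)%N.
Proof. by case: (HP1 j). Qed.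

Lemma ordS_neq (j : 'I_(np X)) (u : 'I_(ns j)) : ordS u != u.
Proof.
apply/eqP => /(congr1 val) /=; have := ns_ge3 j; have := ltn_ord u.
move: (ns j) u => n u /= un n3.
have [lt|eqn] : (u.+1 < n \/ u.+1 = n)%N by lia.
- by rewrite modn_small //; lia.
- by rewrite eqn modnn; lia.
Qed.

Lemma ordSS_neq (j : 'I_(np X)) (u : 'I_(ns j)) : ordS (ordS u) != u.
Proof.
apply/eqP => /(congr1 val) /=; have := ns_ge3 j; have := ltn_ord u.
move: (ns j) u => n u /= un n3.
have [lt|eqn] : (u.+1 < n \/ u.+1 = n)%N by lia.
- rewrite (modn_small lt); have [lt'|eqn'] : (u.+2 < n \/ u.+2 = n)%N by lia.
  + by rewrite modn_small //; lia.
  + by rewrite eqn' modnn; lia.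
- by rewrite eqn modnn modn_small; lia.
Qed.

Lemma cross_edge_vtx_lt0 (j : 'I_(np X)) (u w : 'I_(ns j)) : w != u -> w != ordS u ->
  cross (edge u) (psub (vtx w) (vtx u)) < 0.
Proof. by case: (HP1 j) => _ [convex _]; apply: convex. Qed.

Lemma cross_edge_vtx_le0 (j : 'I_(np X)) (u w : 'I_(ns j)) :
  cross (edge u) (psub (vtx w) (vtx u)) <= 0.
Proof.
have [->|wu] := eqVneq w u; first by rewrite /cross /psub /= !subrr !mulr0 subrr.
have [->|wSu] := eqVneq w (ordS u); last exact/ltW/cross_edge_vtx_lt0.
by rewrite /side_vec /side_end /side_start /cross /psub /= mulrC subrr.
Qed.

Lemma cross_edge_next_lt0 (j : 'I_(np X)) (u : 'I_(ns j)) :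
  cross (edge u) (edge (ordS u)) < 0.
Proof.
have SSu : ordS (ordS u) != ordS u by rewrite (inj_eq (@ordS_inj _)) ordS_neq.
have := cross_edge_vtx_lt0 (ordSS_neq u) SSu.
rewrite /side_vec /side_start /side_end /cross /psub /=; congr (_ < _); ring.
Qed.

Lemma dot_edge_next_ge0 (j : 'I_(np X)) (u : 'I_(ns j)) :
  0 <= dot (edge u) (edge (ordS u)).
Proof. by case: (HP1 j) => _ [_ obtuse]; apply: obtuse. Qed.

(* If [e] crosses side [u] inwards and side [u + 1] outwards, the common
   vertex [u + 1] is the strict maximum of [cross e] over the vertices. *)
Lemma extreme_vtx_cross_lt0 (j : 'I_(np X)) (e : pt R) (u w : 'I_(ns j)) :
  cross (edge u) e < 0 -> 0 < cross (edge (ordS u)) e -> w != ordS u ->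
  cross e (psub (vtx w) (vtx (ordS u))) < 0.
Proof.
move=> ue Sue wSu; have [->|wu] := eqVneq w u.
  by move: ue; rewrite /side_vec /side_start /side_end /cross /psub /=; lra.
have [->|wSSu] := eqVneq w (ordS (ordS u)).
  by move: Sue; rewrite /side_vec /side_start /side_end /cross /psub /=; lra.
have cu := cross_edge_vtx_lt0 wu wSu; have cSu := cross_edge_vtx_lt0 wSu wSSu.
have turn := cross_edge_next_lt0 u.
have : cross (edge u) (edge (ordS u)) * cross e (psub (vtx w) (vtx (ordS u))) =
  cross (edge (ordS u)) (psub (vtx w) (vtx (ordS u))) * cross (edge u) e -
  cross (edge u) (psub (vtx w) (vtx u)) * cross (edge (ordS u)) e.
  by rewrite /side_vec /side_start /side_end /cross /psub /=; ring.
nra.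
Qed.

Lemma extreme_vtx_unique (j : 'I_(np X)) (e : pt R) (u u' : 'I_(ns j)) :
  cross (edge u) e < 0 -> 0 < cross (edge (ordS u)) e ->
  cross (edge u') e < 0 -> 0 < cross (edge (ordS u')) e -> u = u'.
Proof.
move=> ue Sue u'e Su'e; apply/ordS_inj/eqP/negPn/negP => neq.
have := extreme_vtx_cross_lt0 ue Sue (w := ordS u'); rewrite eq_sym => /(_ neq).
have := extreme_vtx_cross_lt0 u'e Su'e neq.
by rewrite /cross /psub /=; lra.
Qed.

Lemma snext_sprev (s : side X) : snext (sprev s) = s.
Proof. by case: s => j u; rewrite /snext /sprev /= ord_predK. Qed.

Lemma sprev_snext (s : side X) : sprev (snext s) = s.
Proof. by case: s => j u; rewrite /snext /sprev /= ordSK. Qed.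

Lemma side_end_sprev (s : side X) : side_end (sprev s) = side_start s.
Proof. by case: s => j u; rewrite /side_end /side_start /sprev /= ord_predK. Qed.

Lemma side_end_start_snext (s : side X) : side_end s = side_start (snext s).
Proof. by []. Qed.

Lemma cross_side_snext_lt0 (s : side X) : cross (side_vec s) (side_vec (snext s)) < 0.
Proof. by case: s => j u; apply: cross_edge_next_lt0. Qed.

Lemma dot_side_snext_ge0 (s : side X) : 0 <= dot (side_vec s) (side_vec (snext s)).
Proof. by case: s => j u; apply: dot_edge_next_ge0. Qed.

Lemma exit_corner_unique (e : pt R) (s s' : side X) : tag s = tag s' ->
  cross (side_vec s) e < 0 -> 0 < cross (side_vec (snext s)) e ->
  cross (side_vec s') e < 0 -> 0 < cross (side_vec (snext s')) e -> s = s'.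
Proof.
case: s s' => j u [j' u'] /= jj'; subst j' => se Sse s'e Ss'e.
by rewrite (extreme_vtx_unique se Sse s'e Ss'e).
Qed.

Definition on_side_line (j : 'I_(np X)) (y : pt R) : Prop :=
  exists2 s : side X, tag s = j & cross (side_vec s) (psub y (side_start s)) = 0.

Lemma vtx_on_side_line (j : 'I_(np X)) (w : 'I_(ns j)) : on_side_line j (vtx w).
Proof. by exists (mkside w); rewrite // /cross /psub /= !subrr !mulr0 subrr. Qed.

Lemma side_interior_on_side_line (s : side X) y :
  in_side_interior s y -> on_side_line (tag s) y.
Proof. by move=> [t [_ ->]]; exists s; rewrite // /cross /psub /padd /pscale /=; ring. Qed.

Lemma interior_cross_side_lt0 (s : side X) y :
  in_poly_interior (tag s) y -> cross (side_vec s) (psub y (side_start s)) < 0.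
Proof. by case: s => j u; apply. Qed.

Lemma closed_side_cross_le0 (s s' : side X) (t : R) : tag s = tag s' -> 0 <= t <= 1 ->
  cross (side_vec s) (psub (padd (side_start s') (pscale t (side_vec s'))) (side_start s))
    <= 0.
Proof.
case: s s' => j u [j' u'] /= jj'; subst j' => /andP[t0 t1].
have := cross_edge_vtx_le0 u u'; have := cross_edge_vtx_le0 u (ordS u').
rewrite [side_vec (existT _ _ u')]/side_vec cross_lerp.
move=> cB cA; rewrite /mkside /side_start /side_end /= in cA cB *; nra.
Qed.

Lemma side_interior_unique (s s' : side X) y : tag s = tag s' ->
  in_side_interior s y -> in_side_interior s' y -> s = s'.
Proof.
case: s s' => j u [j' u'] /= jj'; subst j'.
move=> [t [/andP[t0 t1] ys]] [t' [/andP[t0' t1'] ys']].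
have [-> //|uu'] := eqVneq u u'; exfalso.
have strict : cross (edge u) (psub (vtx u') (vtx u)) < 0 \/
              cross (edge u) (psub (vtx (ordS u')) (vtx u)) < 0.
  have [Su|Su] := eqVneq u' (ordS u); last by left; apply: cross_edge_vtx_lt0; rewrite // eq_sym.
  right; rewrite Su; apply: cross_edge_vtx_lt0; first exact: ordSS_neq.
  by rewrite (inj_eq (@ordS_inj _)) ordS_neq.
have on_line : cross (edge u) (psub y (vtx u)) = 0.
  by rewrite ys /side_vec /side_start /side_end /cross /psub /padd /pscale /=; ring.
have convex_comb : cross (edge u) (psub y (vtx u)) =
    (1 - t') * cross (edge u) (psub (vtx u') (vtx u))
    + t' * cross (edge u) (psub (vtx (ordS u')) (vtx u)).
  by rewrite ys' /side_vec /side_start /side_end /cross /psub /padd /pscale /=; ring.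
have := cross_edge_vtx_le0 u u'; have := cross_edge_vtx_le0 u (ordS u').
by move: strict; nra.
Qed.

Lemma vtx_notin_side_interior (s : side X) (j : 'I_(np X)) (w : 'I_(ns j)) :
  tag s = j -> ~ in_side_interior s (vtx w).
Proof.
case: s => j' u /= jj'; subst j' => -[t [/andP[t0 t1] wE]].
suff [c c0 cE] : exists2 c : R, c != 0 & pscale c (edge u) = (0, 0).
  have := cross_edge_next_lt0 u; move: cE.
  rewrite /side_vec /side_start /side_end /cross /psub /pscale /= => -[].
  move=> /eqP; rewrite mulf_eq0 (negPf c0) /= => /eqP->.
  by move=> /eqP; rewrite mulf_eq0 (negPf c0) /= => /eqP->; rewrite !mul0r subrr ltxx.
have [wu|wu] := eqVneq w u.
  exists t; first by rewrite gt_eqF.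
  move: wE; rewrite wu /side_vec /side_start /side_end /padd /pscale /psub /=.
  by case: (vtx (ordS u)) (vtx u) => [x1 x2] [y1 y2] /= [e1 e2]; congr pair; lra.
have [wSu|wSu] := eqVneq w (ordS u); last first.
  have := cross_edge_vtx_lt0 wu wSu.
  by rewrite wE /side_vec /side_start /side_end /cross /psub /padd /pscale /=; lra.
exists (1 - t); first by rewrite subr_eq0 eq_sym lt_eqF.
move: wE; rewrite wSu /side_vec /side_start /side_end /padd /pscale /psub /=.
by case: (vtx (ordS u)) (vtx u) => [x1 x2] [y1 y2] /= [e1 e2]; congr pair; lra.
Qed.

(* A chord [A + t (B - A)] of the polygon starting on a side line meets the
   line of a closed side [s] crossed inwards by its direction only at [A]:
   an intersection before [A] would put [A] strictly inside the side line
   through it, one after [A] would lie in the open interior. *)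
Lemma chord_meets_entry_side_at_start (s : side X) (A B D y : pt R) (l t : R) :
  0 < l -> psub B A = pscale l D ->
  (forall t', 0 < t' < 1 -> in_poly_interior (tag s) (padd A (pscale t' (psub B A)))) ->
  on_side_line (tag s) A -> 0 <= t <= 1 ->
  y = padd (side_start s) (pscale t (side_vec s)) ->
  cross (side_vec s) D < 0 -> cross D (psub y A) = 0 -> y = A.
Proof.
move=> l0 BA chord [s' s's A_on] t01 yE sD yA.
have DD := dot_self_gt0r (ltr0_neq0 sD).
move: (collinearE yA DD); move: (dot (psub y A) D / dot D D) => c yAc.
have yE' : y = padd A (pscale c D).
  by rewrite -yAc /padd /psub /= !subrKC -surjective_pairing.
have mid_int : in_poly_interior (tag s) (padd A (pscale (l / 2) D)).
  have -> : padd A (pscale (l / 2) D) = padd A (pscale (1 / 2) (psub B A)).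
    by rewrite BA /padd /pscale /=; congr pair; ring.
  by apply: chord; lra.
have y_on : cross (side_vec s) (psub y (side_start s)) = 0.
  by rewrite yE /cross /psub /padd /pscale /=; ring.
have mid_lt := interior_cross_side_lt0 mid_int.
have mid : cross (side_vec s) (psub (padd A (pscale (l / 2) D)) (side_start s)) =
   cross (side_vec s) (psub y (side_start s)) + (l / 2 - c) * cross (side_vec s) D.
  by rewrite yE' /cross /psub /padd /pscale /=; ring.
have cl : c < l / 2 by nra.
have [c0|c0|c0] := ltgtP c 0; last by rewrite yE' c0 /padd /pscale /= !mul0r !addr0; case: (A).
- exfalso.
  have y_le := closed_side_cross_le0 s's t01; rewrite -yE in y_le.
  have mid_lt' : cross (side_vec s') (psub (padd A (pscale (l / 2) D)) (side_start s')) < 0.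
    by apply: interior_cross_side_lt0; rewrite s's.
  have : (l / 2 - c) * cross (side_vec s') (psub A (side_start s')) =
     (l / 2) * cross (side_vec s') (psub y (side_start s'))
     - c * cross (side_vec s') (psub (padd A (pscale (l / 2) D)) (side_start s')).
    by rewrite yE' /cross /psub /padd /pscale /=; ring.
  rewrite A_on mulr0; nra.
- have : in_poly_interior (tag s) y.
    have -> : y = padd A (pscale (c / l) (psub B A)).
      by rewrite BA yE' /padd /pscale /=; congr pair; field; lra.
    by apply: chord; rewrite divr_gt0 //= ltr_pdivrMr // mul1r; lra.
  by move/interior_cross_side_lt0; rewrite y_on ltxx.
Qed.

End ConvexPolygon.
Section SaddleConnection.
Variables (R : realType) (X : polysurf R).
Hypotheses (HG : valid_gluing X) (HP1 : P1 X).
Variables (k : nat) (P : nat -> 'I_(np X)) (a b : nat -> pt R) (ex : nat -> side X).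
Variable d : pt R.
Hypothesis HSC : saddle_connection k P a b ex d.

Local Notation exit_dot m := (dot (side_vec (ex m)) d).
Local Notation offset m n := (cross d (psub (a n) (a m))).

Lemma glueK (s : side X) : glue (glue s) = s.
Proof. by case: HG => glueK _; apply: glueK. Qed.

Lemma side_vec_glue (s : side X) : side_vec (glue s) = pscale (-1) (side_vec s).
Proof. by case: HG => _ glue_vec; apply: glue_vec. Qed.

Lemma seg_dir m : (m < k)%N -> exists2 l, 0 < l & psub (b m) (a m) = pscale l d.
Proof. by case: HSC => _ dir _ _ _ /dir [l [l0 ba]]; exists l. Qed.

Lemma seg_endE m : (m < k)%N -> exists2 l, 0 < l & b m = padd (a m) (pscale l d).
Proof.
move=> /seg_dir [l l0 ba]; exists l => //.
by rewrite -ba /padd /psub /= !subrKC -surjective_pairing.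
Qed.

Lemma seg_transition m : (m.+1 < k)%N ->
  [/\ tag (ex m) = P m, in_side_interior (ex m) (b m),
      P m.+1 = tag (glue (ex m)) & a m.+1 = padd (b m) (glue_transl (ex m))].
Proof. by case: HSC => _ _ _ trans _; apply: trans. Qed.

Lemma seg_interior m : (1 < k)%N -> (m < k)%N -> forall t, 0 < t < 1 ->
  in_poly_interior (P m) (padd (a m) (pscale t (psub (b m) (a m)))).
Proof.
case: HSC => _ _ _ _ int k1 mk t t01.
by case: (int m mk) => [|[k1' _]]; [apply | move: k1; rewrite k1'].
Qed.

Lemma start_vtx : exists u, a 0%N = @vtx R X (P 0%N) u.
Proof. by case: HSC => _ _ []. Qed.

Lemma end_vtx : exists u, b k.-1 = @vtx R X (P k.-1) u.
Proof. by case: HSC => _ _ []. Qed.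

Lemma cross_exit_gt0 m : (m.+1 < k)%N -> 0 < cross (side_vec (ex m)) d.
Proof.
move=> mk; have [tag_ex [t [_ bE]] _ _] := seg_transition mk.
have [l l0 ba] := seg_dir (ltnW mk).
have mid := seg_interior (m := m) (t := 1 / 2) ltac:(lia) (ltnW mk) ltac:(lra).
have := interior_cross_side_lt0 (s := ex m); rewrite tag_ex => /(_ _ mid).
have -> : psub (padd (a m) (pscale (1 / 2) (psub (b m) (a m)))) (side_start (ex m)) =
    padd (pscale t (side_vec (ex m))) (pscale (- (l / 2)) d).
  move: ba; rewrite bE /psub /padd /pscale /= => -[e1 e2].
  by congr pair; lra.
rewrite /cross /padd /pscale /=; nra.
Qed.

Lemma entry_in_side_interior m : (m.+1 < k)%N -> in_side_interior (glue (ex m)) (a m.+1).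
Proof.
move=> mk; have [_ [t [/andP[t0 t1] bE]] _ aE] := seg_transition mk.
exists (1 - t); split; first by apply/andP; split; lra.
have endE : side_end (glue (ex m)) = padd (side_start (glue (ex m))) (side_vec (glue (ex m))).
  by rewrite /side_vec /padd /psub /= !subrKC -surjective_pairing.
rewrite aE bE /glue_transl endE side_vec_glue /padd /pscale /psub /=.
by congr pair; ring.
Qed.

Lemma cross_entry_lt0 m : (m.+1 < k)%N -> cross (side_vec (glue (ex m))) d < 0.
Proof. by move=> /cross_exit_gt0; rewrite side_vec_glue crossNl oppr_lt0. Qed.

Lemma positive_exit_dot m : seg_positive k ex m -> exit_dot m.-1 < 0 /\ 0 < exit_dot m.
Proof.
case=> m0 mk exE; have mk' : (m.-1.+1 < k)%N by rewrite prednK // ltnW.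
have [] := corner_dot_gt0 (cross_side_snext_lt0 HP1 (glue (ex m.-1)))
  (dot_side_snext_ge0 HP1 _) (cross_entry_lt0 mk'); first by rewrite -exE cross_exit_gt0.
by rewrite side_vec_glue dotNl oppr_gt0 -exE.
Qed.

Lemma negative_exit_dot m : seg_negative k ex m -> 0 < exit_dot m.-1 /\ exit_dot m < 0.
Proof.
case=> m0 mk exE; have mk' : (m.-1.+1 < k)%N by rewrite prednK // ltnW.
have := corner_dot_lt0 (cross_side_snext_lt0 HP1 (sprev (glue (ex m.-1))))
  (dot_side_snext_ge0 HP1 _); rewrite snext_sprev -exE.
case/(_ d (cross_exit_gt0 mk) (cross_entry_lt0 mk')) => exm.
by rewrite side_vec_glue dotNl oppr_lt0.
Qed.

Lemma adjacent_exit_dot_flip m : seg_adjacent k ex m ->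
  (0 < exit_dot m) = ~~ (0 < exit_dot m.-1).
Proof.
by case=> [/positive_exit_dot|/negative_exit_dot] [lt1 lt2];
  rewrite ?lt2 ?lt1 ?(lt_gtF lt1) ?(lt_gtF lt2).
Qed.

Lemma run_exit_dot_parity i n :
  (forall l, (i <= l <= i + n)%N -> seg_adjacent k ex l) ->
  (0 < exit_dot (i + n)) = odd n.+1 (+) (0 < exit_dot i.-1).
Proof.
elim: n => [|n IH] run.
  by rewrite addn0 adjacent_exit_dot_flip //; apply: run; rewrite addn0 leqnn.
rewrite addnS adjacent_exit_dot_flip; last by apply: run; rewrite -addnS leq_addr leqnn.
rewrite /= IH ?oddS ?addNb // => l /andP[il ln].
by apply: run; rewrite il (leq_trans ln) // leq_add2l.
Qed.

Lemma seg_start_on_side_line m : (m < k)%N -> on_side_line (P m) (a m).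
Proof.
case: m => [_|m mk]; first by have [u ->] := start_vtx; apply: vtx_on_side_line.
have [_ _ -> _] := seg_transition mk.
exact/side_interior_on_side_line/entry_in_side_interior.
Qed.

Lemma seg_end_on_side_line m : (m < k)%N -> on_side_line (P m) (b m).
Proof.
move=> mk; have [mk'|km] := ltnP m.+1 k.
  by have [<- ex_b _ _] := seg_transition mk'; apply: side_interior_on_side_line.
have -> : m = k.-1 by lia.
by have [u ->] := end_vtx; apply: vtx_on_side_line.
Qed.

Lemma seg_start_side m (s : side X) : (m < k)%N -> tag s = P m ->
  in_side_interior s (a m) -> (0 < m)%N /\ s = glue (ex m.-1).
Proof.
case: m => [|m] mk tag_s a_s.
  by have [u a0] := start_vtx; move: a_s; rewrite a0 => /(vtx_notin_side_interior HP1 tag_s).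
split=> //; have [_ _ tag_glue _] := seg_transition mk.
by apply: (side_interior_unique HP1 _ a_s (entry_in_side_interior mk)); rewrite tag_s tag_glue.
Qed.

Lemma seg_end_side m (s : side X) : (m < k)%N -> tag s = P m ->
  in_side_interior s (b m) -> (m.+1 < k)%N /\ s = ex m.
Proof.
move=> mk tag_s b_s; have [mk'|km] := ltnP m.+1 k.
  split=> //; have [tag_ex ex_b _ _] := seg_transition mk'.
  by apply: (side_interior_unique HP1 _ b_s ex_b); rewrite tag_s tag_ex.
have [u bE] := end_vtx; have mE : m = k.-1 by lia.
by move: b_s tag_s; rewrite mE bE => b_s /(vtx_notin_side_interior HP1) /(_ b_s).
Qed.

Lemma enters_through m (s : side X) : (1 < k)%N -> (m < k)%N -> tag s = P m ->
  cross (side_vec s) d < 0 ->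
  cross d (psub (side_start s) (a m)) < 0 -> 0 < cross d (psub (side_end s) (a m)) ->
  in_side_interior s (a m).
Proof.
move=> k1 mk tag_s sd start_lt end_gt.
have := @segment_meets_line _ d (side_start s) (side_end s) (a m).
rewrite pmulr_llt0 // => /(_ start_lt) [t t01 on_line].
have [l l0 ba] := seg_dir mk.
exists t; split=> //; symmetry.
apply: (chord_meets_entry_side_at_start HP1 (s := s) l0 ba) => //; rewrite ?tag_s //.
- exact: seg_interior.
- exact: seg_start_on_side_line.
- by case/andP: t01 => t0 t1; rewrite !ltW.
Qed.

Lemma exits_through m (s : side X) : (1 < k)%N -> (m < k)%N -> tag s = P m ->
  0 < cross (side_vec s) d ->
  0 < cross d (psub (side_start s) (a m)) -> cross d (psub (side_end s) (a m)) < 0 ->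
  in_side_interior s (b m).
Proof.
move=> k1 mk tag_s sd start_gt end_lt.
have := @segment_meets_line _ d (side_start s) (side_end s) (a m).
rewrite pmulr_rlt0 // => /(_ end_lt) [t t01 on_line].
have [l l0 ba] := seg_dir mk.
exists t; split=> //; symmetry.
apply: (chord_meets_entry_side_at_start HP1 (s := s) (t := t) (B := a m) (D := pscale (-1) d) l0).
- by move: ba; rewrite /psub /pscale /= => -[e1 e2]; congr pair; lra.
- move=> t' t'01; rewrite tag_s.
  have -> : padd (b m) (pscale t' (psub (a m) (b m))) =
      padd (a m) (pscale (1 - t') (psub (b m) (a m))).
    by rewrite /padd /pscale /psub /=; congr pair; ring.
  by apply: seg_interior => //; case/andP: t'01 => t0 t1; apply/andP; split; lra.
- by rewrite tag_s; apply: seg_end_on_side_line.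
- by case/andP: t01 => t0 t1; rewrite !ltW.
- by [].
- by rewrite crossNr oppr_lt0.
- move: on_line; rewrite crossNl.
  have : cross d (psub (b m) (a m)) = 0 by rewrite ba /cross /pscale /=; ring.
  by rewrite /cross /psub /padd /pscale /=; lra.
Qed.

Lemma cross_seg_end m x : (m < k)%N -> cross d (psub x (b m)) = cross d (psub x (a m)).
Proof.
by move=> /seg_endE [l _ ->]; rewrite /cross /psub /padd /pscale /=; ring.
Qed.

Lemma cross_exit_start_gt0 m : (m.+1 < k)%N -> 0 < cross d (psub (side_start (ex m)) (a m)).
Proof.
move=> mk; have [_ [t [/andP[t0 _] bE]] _ _] := seg_transition mk.
rewrite -(cross_seg_end _ (ltnW mk)).
have -> : cross d (psub (side_start (ex m)) (b m)) = t * cross (side_vec (ex m)) d.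
  by rewrite bE /cross /psub /padd /pscale /=; ring.
by apply: mulr_gt0 => //; apply: cross_exit_gt0.
Qed.

Lemma cross_exit_end_lt0 m : (m.+1 < k)%N -> cross d (psub (side_end (ex m)) (a m)) < 0.
Proof.
move=> mk; have [_ [t [/andP[_ t1] bE]] _ _] := seg_transition mk.
rewrite -(cross_seg_end _ (ltnW mk)).
have -> : cross d (psub (side_end (ex m)) (b m)) = - ((1 - t) * cross (side_vec (ex m)) d).
  by rewrite bE /side_vec /cross /psub /padd /pscale /=; ring.
by rewrite oppr_lt0; apply: mulr_gt0; [rewrite subr_gt0 | exact: cross_exit_gt0].
Qed.

Lemma cross_entry_start_lt0 m : (m.+1 < k)%N ->
  cross d (psub (side_start (glue (ex m))) (a m.+1)) < 0.
Proof.
move=> mk; have [t [/andP[t0 _] aE]] := entry_in_side_interior mk.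
have -> : cross d (psub (side_start (glue (ex m))) (a m.+1))
    = t * cross (side_vec (glue (ex m))) d.
  by rewrite aE /cross /psub /padd /pscale /=; ring.
by rewrite pmulr_rlt0 //; apply: cross_entry_lt0.
Qed.

Lemma cross_entry_end_gt0 m : (m.+1 < k)%N ->
  0 < cross d (psub (side_end (glue (ex m))) (a m.+1)).
Proof.
move=> mk; have [t [/andP[_ t1] aE]] := entry_in_side_interior mk.
have -> : cross d (psub (side_end (glue (ex m))) (a m.+1))
    = - ((1 - t) * cross (side_vec (glue (ex m))) d).
  by rewrite aE /side_vec /cross /psub /padd /pscale /=; ring.
by rewrite oppr_gt0 pmulr_rlt0 ?subr_gt0 //; apply: cross_entry_lt0.
Qed.

(* Both entry sides precede the unique corner of the polygon at which [d]
   turns from entering to leaving (for negative segments, with [-d]). *)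
Lemma same_sign_entry_eq p q : P p = P q ->
  (seg_positive k ex p /\ seg_positive k ex q) \/
  (seg_negative k ex p /\ seg_negative k ex q) ->
  ex p.-1 = ex q.-1.
Proof.
move=> Ppq sgn.
have [p0 pk q0 qk] : [/\ (0 < p)%N, (p.+1 < k)%N, (0 < q)%N & (q.+1 < k)%N].
  by case: sgn => [] [[? ? _] [? ? _]].
have pk' : (p.-1.+1 < k)%N by rewrite prednK // ltnW.
have qk' : (q.-1.+1 < k)%N by rewrite prednK // ltnW.
have [_ _ tag_p _] := seg_transition pk'; have [_ _ tag_q _] := seg_transition qk'.
rewrite prednK // in tag_p; rewrite prednK // in tag_q.
suff : glue (ex p.-1) = glue (ex q.-1) by move/(congr1 (@glue R X)); rewrite !glueK.
case: sgn => [[[_ _ exp] [_ _ exq]]|[[_ _ exp] [_ _ exq]]].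
- apply: (exit_corner_unique HP1 (e := d)); rewrite -?exp -?exq -?tag_p -?tag_q //.
  + exact: cross_entry_lt0.
  + exact: cross_exit_gt0.
  + exact: cross_entry_lt0.
  + exact: cross_exit_gt0.
- apply: (can_inj (@snext_sprev R X)); apply: (exit_corner_unique HP1 (e := pscale (-1) d)).
  + by rewrite /sprev /= -tag_p -tag_q.
  + by rewrite crossNr -exp oppr_lt0 cross_exit_gt0.
  + by rewrite snext_sprev crossNr oppr_gt0 cross_entry_lt0.
  + by rewrite crossNr -exq oppr_lt0 cross_exit_gt0.
  + by rewrite snext_sprev crossNr oppr_gt0 cross_entry_lt0.
Qed.

Lemma glue_inj : injective (@glue R X).
Proof. exact: can_inj glueK. Qed.

Lemma adjacent_sign_of_exit m : seg_adjacent k ex m ->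
  if 0 < exit_dot m then seg_positive k ex m else seg_negative k ex m.
Proof.
case=> [/[dup] /positive_exit_dot [_ ->] //|/[dup] /negative_exit_dot [_ /lt_gtF ->] //].
Qed.

Lemma adjacent_sign_of_entry m : seg_adjacent k ex m ->
  if 0 < exit_dot m.-1 then seg_negative k ex m else seg_positive k ex m.
Proof.
case=> [/[dup] /positive_exit_dot [/lt_gtF -> _] //|/[dup] /negative_exit_dot [-> _] //].
Qed.

Lemma adjacent_exits_eq_pred m n : seg_adjacent k ex m -> seg_adjacent k ex n ->
  ex m = ex n -> ex m.-1 = ex n.-1.
Proof.
move=> /adjacent_sign_of_exit + /adjacent_sign_of_exit + exmn; rewrite exmn.
case: ifP => _ [_ _ exm] [_ _ exn]; apply: glue_inj.
- by apply: (can_inj (@sprev_snext R X)); rewrite -exm -exn exmn.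
- by apply: (can_inj (@snext_sprev R X)); rewrite -exm -exn exmn.
Qed.

Lemma adjacent_exits_eq_succ m n : seg_adjacent k ex m.+1 -> seg_adjacent k ex n.+1 ->
  ex m = ex n -> ex m.+1 = ex n.+1.
Proof.
move=> /adjacent_sign_of_entry + /adjacent_sign_of_entry + exmn; rewrite /= exmn.
by case: ifP => _ [_ _ ->] [_ _ ->]; rewrite /= exmn.
Qed.

(* Adjacent segments are determined by their predecessor and by their
   successor, so one coincidence [ex (p - 1) = ex (p - 1 + del)] inside a run
   of adjacent segments makes the exit sides [del]-periodic along the run. *)
Lemma run_exits_periodic i j p del : (0 < i)%N -> (i <= p)%N -> (p + del <= j)%N ->
  (forall l, (i <= l <= j)%N -> seg_adjacent k ex l) -> ex p.-1 = ex (p.-1 + del) ->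
  forall m, (i.-1 <= m)%N -> (m + del <= j)%N -> ex m = ex (m + del).
Proof.
move=> i0 ip pj run base.
have back r : (r <= p - i)%N -> ex (p.-1 - r) = ex (p.-1 - r + del).
  elim: r => [|r IH] r_le; first by rewrite subn0.
  have := adjacent_exits_eq_pred (run (p.-1 - r)%N _) (run (p.-1 - r + del)%N _) (IH _).
  have -> : (p.-1 - r).-1 = (p.-1 - r.+1)%N by lia.
  have -> : (p.-1 - r + del).-1 = (p.-1 - r.+1 + del)%N by lia.
  by apply; try apply/andP; lia.
have fwd r : (p.-1 + r + del <= j)%N -> ex (p.-1 + r) = ex (p.-1 + r + del).
  elim: r => [|r IH] r_le; first by rewrite addn0.
  have := adjacent_exits_eq_succ (run (p.-1 + r).+1 _) (run (p.-1 + r + del).+1 _) (IH _).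
  have -> : (p.-1 + r).+1 = (p.-1 + r.+1)%N by lia.
  have -> : (p.-1 + r + del).+1 = (p.-1 + r.+1 + del)%N by lia.
  by apply; try apply/andP; lia.
move=> m im mj; have [mp|pm] := leqP m p.-1.
  by have := back (p.-1 - m)%N; rewrite subKn //; apply; lia.
by have := fwd (m - p.-1)%N; rewrite subnKC; [apply; lia | lia].
Qed.

Lemma offset_succ m n : (m.+1 < k)%N -> (n.+1 < k)%N -> ex m = ex n ->
  offset m.+1 n.+1 = offset m n.
Proof.
move=> mk nk exmn.
have [_ _ _ ->] := seg_transition mk; have [_ _ _ ->] := seg_transition nk.
have [lm _ ->] := seg_endE (ltnW mk); have [ln _ ->] := seg_endE (ltnW nk).
by rewrite exmn /cross /psub /padd /pscale /=; ring.
Qed.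

Lemma offset_shift m del r :
  (forall l, (m <= l < m + r)%N -> ex l = ex (l + del) /\ (l + del).+1 < k)%N ->
  offset (m + r) (m + r + del) = offset m (m + del).
Proof.
elim: r => [|r IH] per; first by rewrite addn0.
have [exE lk] := per (m + r)%N ltac:(lia).
rewrite -IH => [|l lr]; last by apply: per; lia.
by rewrite addnS addSn offset_succ //; lia.
Qed.

(* At the start of a maximal run, segment [m0] leaves through the exit side
   of the later segment [m1] of the run without having crossed the entry side
   of [m1], which puts [a m1] on the side of the line of segment [m0] given by
   the sign of [exit_dot m0]. *)
Lemma run_start_offset_sign m0 m1 : (m1.+1 < k)%N -> (m0 < m1)%N -> ex m0 = ex m1 ->
  seg_adjacent k ex m1 -> ((0 < m0)%N -> ~ seg_adjacent k ex m0) ->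
  0 < exit_dot m0 * offset m0 m1.
Proof.
move=> m1k m01 ex01 adj1 nadj0.
have m0k : (m0.+1 < k)%N by lia.
have m1k' : (m1.-1.+1 < k)%N by lia.
have [tag0 _ _ _] := seg_transition m0k; have [tag1 _ _ _] := seg_transition m1k.
have [_ _ tag_entry _] := seg_transition m1k'; rewrite prednK ?(leq_ltn_trans _ m01) // in tag_entry.
set g := glue (ex m1.-1) in tag_entry.
have tag_g : tag g = P m0 by rewrite -tag_entry -tag1 -ex01 tag0.
have enters_g : cross d (psub (side_start g) (a m0)) < 0 ->
    0 < cross d (psub (side_end g) (a m0)) -> (0 < m0)%N /\ g = glue (ex m0.-1).
  move=> st en; apply: (seg_start_side (ltnW m0k) tag_g).
  by apply: enters_through; rewrite ?tag_g ?cross_entry_lt0 //; lia.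
case: adj1 => [pos1|neg1].
- have [_ dot0] := positive_exit_dot pos1; rewrite -ex01 in dot0.
  have [_ _ ex1] := pos1; rewrite -/g in ex1.
  have a1 := cross_entry_start_lt0 m1k'; rewrite prednK ?(leq_ltn_trans _ m01) // in a1.
  have a0 : 0 <= cross d (psub (side_start g) (a m0)).
    rewrite leNgt; apply/negP => st.
    have [m0_0 gE] := enters_g st ltac:(by rewrite side_end_start_snext -ex1 -ex01 cross_exit_start_gt0).
    by apply: (nadj0 m0_0); left; split; rewrite // ex01 ex1 gE.
  have := cross_psubB d (side_start g) (a m1) (a m0).
  by rewrite pmulr_rgt0 //; lra.
- have [_ dot0] := negative_exit_dot neg1; rewrite -ex01 in dot0.
  have [_ _ ex1] := neg1; rewrite -/g in ex1.
  have a1 := cross_entry_end_gt0 m1k'; rewrite prednK ?(leq_ltn_trans _ m01) // in a1.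
  have a0 : cross d (psub (side_end g) (a m0)) <= 0.
    rewrite leNgt; apply/negP => en.
    have [m0_0 gE] := enters_g ltac:(by rewrite -side_end_sprev -ex1 -ex01 cross_exit_end_lt0) en.
    by apply: (nadj0 m0_0); right; split; rewrite // ex01 ex1 gE.
  have := cross_psubB d (side_end g) (a m1) (a m0).
  by rewrite nmulr_rgt0 //; lra.
Qed.

Lemma run_end_offset_sign n n' : (n < n')%N -> (n'.+1 < k)%N -> ex n = ex n' ->
  seg_adjacent k ex n.+1 -> ((n'.+2 < k)%N -> ~ seg_adjacent k ex n'.+1) ->
  0 < exit_dot n' * offset n.+1 n'.+1.
Proof.
move=> nn' n'k exnn' adj1 nadj.
have nk : (n.+2 < k)%N by lia.
have [_ _ tag_n _] := seg_transition (ltnW nk); have [_ _ tag_n' _] := seg_transition n'k.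
have [tag1 _ _ _] := seg_transition nk.
have exits_F (F : side X) : tag F = P n.+1 -> 0 < cross (side_vec F) d ->
    0 < cross d (psub (side_start F) (a n'.+1)) ->
    cross d (psub (side_end F) (a n'.+1)) < 0 -> (n'.+2 < k)%N /\ F = ex n'.+1.
  move=> tagF Fd st en; have tagF' : tag F = P n'.+1 by rewrite tagF tag_n tag_n' exnn'.
  by apply: (seg_end_side _ tagF'); [lia | apply: exits_through => //; lia].
case: adj1 => [pos1|neg1].
- have [dot0 _] := positive_exit_dot pos1; rewrite /= exnn' in dot0.
  have [_ _ ex1] := pos1; rewrite /= exnn' in ex1.
  have a1 := cross_exit_end_lt0 nk; rewrite ex1 in a1.
  have a0 : 0 <= cross d (psub (side_end (snext (glue (ex n')))) (a n'.+1)).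
    rewrite leNgt; apply/negP => en.
    have [n'k' FE] := exits_F (ex n.+1) tag1 ltac:(by rewrite cross_exit_gt0)
      ltac:(by rewrite ex1 -side_end_start_snext cross_entry_end_gt0) ltac:(by rewrite ex1).
    by apply: nadj => //; left; split; rewrite // -FE.
  have := cross_psubB d (side_end (snext (glue (ex n')))) (a n'.+1) (a n.+1).
  by rewrite nmulr_rgt0 //; lra.
- have [dot0 _] := negative_exit_dot neg1; rewrite /= exnn' in dot0.
  have [_ _ ex1] := neg1; rewrite /= exnn' in ex1.
  have a1 := cross_exit_start_gt0 nk; rewrite ex1 in a1.
  have a0 : cross d (psub (side_start (sprev (glue (ex n')))) (a n'.+1)) <= 0.
    rewrite leNgt; apply/negP => st.
    have [n'k' FE] := exits_F (ex n.+1) tag1 ltac:(by rewrite cross_exit_gt0)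
      ltac:(by rewrite ex1) ltac:(by rewrite ex1 side_end_sprev cross_entry_start_lt0).
    by apply: nadj => //; right; split; rewrite // -FE.
  have := cross_psubB d (side_start (sprev (glue (ex n')))) (a n'.+1) (a n.+1).
  by rewrite pmulr_rgt0 //; lra.
Qed.

Lemma run_exit_dot_same_sign i j : maximal_adjacent_run k ex i j ->
  (exists p q : nat,
     [/\ (i <= p <= j)%N, (i <= q <= j)%N, p <> q, P p = P q &
         ((seg_positive k ex p /\ seg_positive k ex q) \/
          (seg_negative k ex p /\ seg_negative k ex q))]) ->
  (0 < exit_dot j) = (0 < exit_dot i.-1).
Proof.
move=> [ij jk run start_max end_max] [p [q [/andP[ip pj] /andP[iq qj] pq Ppq sgn]]].
have i0 : (0 < i)%N by case: (run i); rewrite ?leqnn ?ij // => -[].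
have j1k : (j.+1 < k)%N by case: (run j); rewrite ?leqnn ?ij // => -[].
wlog lt_pq : p q ip pj iq qj pq Ppq sgn / (p < q)%N.
  move=> wlog_lt; have [lt|gt|eq] := ltngtP p q; first exact: (wlog_lt p q).
  - by apply: (wlog_lt q p) => //; [move=> /esym | case: sgn => -[]; [left | right]].
  - by [].
pose del := (q - p)%N.
have per := run_exits_periodic i0 ip (_ : (p + del <= j)%N) run.
have {}per m : (i.-1 <= m)%N -> (m + del <= j)%N -> ex m = ex (m + del).
  apply: per; first by rewrite /del; lia.
  by rewrite (same_sign_entry_eq Ppq sgn); congr ex; rewrite /del; lia.
have start := run_start_offset_sign (m0 := i.-1) (m1 := i.-1 + del) ltac:(rewrite /del; lia)
  ltac:(rewrite /del; lia) (per _ (leqnn _) ltac:(rewrite /del; lia))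
  (run (i.-1 + del) ltac:(apply/andP; rewrite /del; lia)) (fun _ => start_max i0).
have stop := run_end_offset_sign (n := j - del) (n' := j) ltac:(rewrite /del; lia) j1k
  ltac:(rewrite -[in RHS](@subnK del j); [apply: per | ]; rewrite /del; lia)
  (run (j - del).+1 ltac:(apply/andP; rewrite /del; lia)) (fun jk' => end_max (ltnW jk')).
apply: mul_gt0_same_sign stop _.
have := offset_shift (m := i.-1) (del := del) (r := ((j - del).+1 - i.-1)%N).
rewrite subnKC; last by rewrite /del; lia.
have -> : ((j - del).+1 + del)%N = j.+1 by rewrite /del; lia.
move=> ->; first exact: start.
move=> l /andP[il lj]; split; first by apply: per => //; rewrite /del; lia.
by rewrite /del; lia.
Qed.

End SaddleConnection.

Theorem mainTheorem9 (R : realType) (X : polysurf R)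
  (k : nat) (P : nat -> 'I_(np X)) (a b : nat -> pt R) (ex : nat -> side X)
  (d : pt R) (i j : nat) :
  valid_gluing X -> P1 X -> P2 X ->
  saddle_connection k P a b ex d ->
  ~ sc_is_side k P a b -> ~ sc_is_diagonal k P a b ->
  maximal_adjacent_run k ex i j ->
  (exists p q : nat,
     [/\ (i <= p <= j)%N, (i <= q <= j)%N, p <> q, P p = P q &
         ((seg_positive k ex p /\ seg_positive k ex q) \/
          (seg_negative k ex p /\ seg_negative k ex q))]) ->
  ~~ odd (j.+1 - i).
Proof.
move=> HG HP1 _ HSC _ _ run same_sign.
have [ij _ adj _ _] := run.
have := run_exit_dot_parity HG HP1 HSC (i := i) (n := j - i).
rewrite subnKC // (run_exit_dot_same_sign HG HP1 HSC run same_sign) subSn //.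
by move=> /(_ adj) /eqP; case: (0 < _); case: (odd _).
Qed.
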